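(* Let $G$ be a directed acyclic graph with $n$ vertices labelled $v_1,\ldots,v_n$ in a topological order, with real edge lengths, let $\varepsilon>0$, $q=(1+\varepsilon)^{1/(n+1)}$, and let $\tau,\tau'$ be the functions defined in the context. Given a real $L$, let $k$ be an integer such that $\tau'(v_n,q^k)\le L<\tau'(v_n,q^{k+1})$ and let $a$ be a non-negative integer such that $\tau(v_n,a)\le L<\tau(v_n,a+1)$. Then $$(1+\varepsilon)^{-1}\le \frac{a}{q^k}\le 1+\varepsilon.$$
   Context: For a vertex $v_i$ and a real number $x\ge 0$, $\tau(v_i,x)$ is the infimum of all real $L'$ such that there are at least $x$ directed paths from $v_1$ to $v_i$ of length (sum of edge lengths) at most $L'$, with $\inf\emptyset=\infty$; the trivial path from $v_1$ to itself has length $0$. For a vertex $v_i$ with $i>1$, let $p_1,\ldots,p_d$ be the tails of the edges entering $v_i$ and $l_1,\ldots,l_d$ the lengths of these edges. The function $\tau'$ is defined on pairs $(v_i,y)$ with $y=0$ or $y=q^j$ for an integer $j$ by: $\tau'(v_1,0)=-\infty$, $\tau'(v_1,y)=0$ for $0<y\le 1$, $\tau'(v_1,y)=\infty$ for $y>1$, and for $i>1$, $$\tau'(v_i,q^j)=\min_{\substack{\alpha_1,\ldots,\alpha_d\ge 0\\ \sum_s\alpha_s=1}}\ \max_{s}\Big(\tau'\big(p_s,q^{\lfloor j+\log_q\alpha_s\rfloor}\big)+l_s\Big),$$ where $q^{\lfloor j+\log_q\alpha_s\rfloor}$ is interpreted as $0$ when $\alpha_s=0$, and $\tau'(v_i,0)=-\infty$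 for every $i$. *)

From HB Require Import structures.
From mathcomp Require Import all_boot all_order all_algebra.
From mathcomp Require Import all_classical all_reals all_analysis.
Set Implicit Arguments. Unset Strict Implicit. Unset Printing Implicit Defensive.
Import Order.TTheory GRing.Theory Num.Theory.
Local Open Scope ring_scope.

(* Vertices v_1,...,v_n are the ordinals 0,...,n-1 of 'I_n (v_i = i-1).
   E u v : there is an edge u -> v;  len u v : its (real) length. *)

Section Paths.
Variables (R : realType) (n : nat) (E : rel 'I_n) (len : 'I_n -> 'I_n -> R).

Definition plen (x : 'I_n) (s : seq 'I_n) : R :=
  \sum_(e <- zip (x :: s) s) len e.1 e.2.

(* number of directed paths from v1 to v of length at most L'.
   (Paths with k edges are tuples of k vertices after v1; in a graph whose
   edges go from smaller to larger labels, every path has fewer than n edges.) *)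
Definition npaths (v1 v : 'I_n) (L' : R) : nat :=
  \sum_(k < n) #|[set t : k.-tuple 'I_n |
      [&& path E v1 t, last v1 t == v & (plen v1 t <= L')%R]]|.

Definition tau (v1 v : 'I_n) (x : R) : \bar R :=
  ereal_inf [set (L' %:E)%E | L' in [set L' : R | (x <= (npaths v1 v L')%:R)%R]].

Variable q : R.

Definition logq (x : R) : R := ln x / ln q.

(* one step of the recursion for tau', given the table T for earlier vertices;
   the argument y : option int encodes y = 0 (None) or y = q^j (Some j). *)
Definition tau'_step (T : 'I_n -> option int -> \bar R) (i : 'I_n)
    (y : option int) : \bar R :=
  match y with
  | None => -oo%E
  | Some j =>
    if (nat_of_ord i == 0)%N then (if (j <= 0)%R then 0%E else +oo%E)
    else ereal_inf [set z : \bar R | exists alpha : 'I_n -> R,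
        [/\ (forall p, E p i -> (0 <= alpha p)%R),
            (\sum_(p | E p i) alpha p = 1)%R &
            z = \big[Order.max/-oo%E]_(p | E p i)
                  ((if (alpha p == 0)%R then T p None
                    else T p (Some (Num.floor (j%:~R + logq (alpha p)))))
                   + (len p i)%:E)%E]]
  end.

Fixpoint tau'_tab (m : nat) : 'I_n -> option int -> \bar R :=
  match m with
  | 0 => fun _ _ => -oo%E
  | m'.+1 => fun i y =>
      if (i < m')%N then tau'_tab m' i y else tau'_step (tau'_tab m') i y
  end.

Definition tau' (i : 'I_n) (y : option int) : \bar R := tau'_tab (i.+1) i y.

End Paths.

Lemma pred_ltn (n : nat) (hn : (0 < n)%N) : (n.-1 < n)%N.
Proof. by rewrite ltn_predL. Qed.

Definition vfirst (n : nat) (hn : (0 < n)%N) : 'I_n := Ordinal hn.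
Definition vlast (n : nat) (hn : (0 < n)%N) : 'I_n := Ordinal (pred_ltn hn).

(* Write N_v(L) for the number of paths from v_1 to v of length at most L.
   Splitting a path at its last edge gives N_v(L) = \sum_(p -> v) N_p(L - l(p,v)),
   and tau' is the same recursion carried out on a logarithmic scale with base q.
   Along the topological order one shows:
   - if tau'(v_i, q^j) < M then N_i(M) >= q^(j - i + 1), since rounding the
     exponent down costs less than one factor q per step of the recursion;
   - if N_i(L) >= q^j then tau'(v_i, q^j) <= L, taking the weights alpha_p
     proportional to N_p(L - l(p,v_i)).
   At v_n this sandwiches a between q^(k-n+1) and q^(k+1), and q^(n+1) = 1 + eps. *)

From HB Require Import structures.
From mathcomp Require Import all_boot all_order all_algebra.
From mathcomp Require Import all_classical all_reals all_analysis.
From mathcomp Require Import ring lra.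
Set Implicit Arguments. Unset Strict Implicit. Unset Printing Implicit Defensive.
Import Order.TTheory GRing.Theory Num.Theory.
Local Open Scope ring_scope.

Lemma card_set_sum (T : finType) (P : pred T) :
  #|[set t | P t]| = (\sum_t (P t : nat))%N.
Proof.
rewrite -sum1_card big_mkcond /=; apply: eq_bigr => t _.
by rewrite inE; case: (P t).
Qed.

Lemma big_tuple_rcons (T : finType) k (F : k.+1.-tuple T -> nat) :
  (\sum_t F t = \sum_(t : k.-tuple T) \sum_(x : T) F (rcons_tuple t x))%N.
Proof.
rewrite pair_bigA /=.
pose h (p : k.-tuple T * T) := rcons_tuple p.1 p.2.
have h_bij : bijective h.
  apply: inj_card_bij; last by rewrite card_prod !card_tuple expnS mulnC.
  by move=> [t x] [t' x'] /(congr1 val) /rcons_inj [/val_inj -> ->].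
by rewrite (reindex h) //; exact: onW_bij.
Qed.

Lemma big_nat_recl0 m (F : nat -> nat) : (0 < m)%N ->
  (\sum_(0 <= k < m) F k = F 0%N + \sum_(0 <= k < m.-1) F k.+1)%N.
Proof. by case: m => // m _; rewrite big_nat_recl. Qed.

Lemma big_nat_recr0 m (F : nat -> nat) : (0 < m)%N ->
  (\sum_(0 <= k < m) F k = \sum_(0 <= k < m.-1) F k + F m.-1)%N.
Proof. by case: m => // m _; rewrite big_nat_recr. Qed.

Lemma ord_ltn_ind n (P : 'I_n -> Prop) :
  (forall i : 'I_n, (forall p : 'I_n, (p < i)%N -> P p) -> P i) -> forall i, P i.
Proof.
move=> IH; suff: forall m (i : 'I_n), (i < m)%N -> P i.
  by move=> h i; exact: h i.+1 i (ltnSn i).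
elim=> // m IHm i /[!ltnS] lt_im; apply: IH => p lt_pi.
exact: IHm (leq_trans lt_pi lt_im).
Qed.

Lemma lte_EFin_dense (R : realType) (x : R) (y : \bar R) :
  (x%:E < y)%E -> exists2 z, x < z & (z%:E < y)%E.
Proof.
case: y => [r| |] // lt_xy; last by exists (x + 1); [lra | exact: ltry].
by rewrite lte_fin in lt_xy; exists ((x + r) / 2); rewrite ?lte_fin; lra.
Qed.

Lemma lte_addEFin (R : realType) (x : \bar R) (c M : R) :
  (x + c%:E < M%:E)%E -> (x < (M - c)%:E)%E.
Proof.
case: x => [r| |] //= h; last exact: ltNyr.
by rewrite lte_fin ltrBrDr -lte_fin EFinD.
Qed.

Lemma lee_addEFin (R : realType) (x : \bar R) (c M : R) :
  (x <= (M - c)%:E)%E -> (x + c%:E <= M%:E)%E.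
Proof.
case: x => [r| |] //= h; last by rewrite leNye.
by rewrite -EFinD lee_fin -lerBrDr -lee_fin.
Qed.

Section Paths.
Variables (R : realType) (n : nat) (E : rel 'I_n) (len : 'I_n -> 'I_n -> R).
Hypothesis E_topo : forall u v : 'I_n, E u v -> (u < v)%N.

Lemma path_addsize_le_last (x : 'I_n) (t : seq 'I_n) :
  path E x t -> (x + size t <= last x t)%N.
Proof.
elim: t x => [|y t IH] x /=; first by rewrite addn0.
move=> /andP[/E_topo lt_xy /IH]; rewrite addnS; apply: leq_trans.
by rewrite ltn_add2r.
Qed.

Lemma plen_cons (x z : 'I_n) (s : seq 'I_n) :
  plen len x (z :: s) = len x z + plen len z s.
Proof. by rewrite /plen /= big_cons. Qed.

Lemma plen_rcons (x : 'I_n) (s : seq 'I_n) (y : 'I_n) :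
  plen len x (rcons s y) = plen len x s + len (last x s) y.
Proof.
elim: s x => [|z s IH] x /=; last by rewrite !plen_cons IH addrA.
by rewrite /plen /= big_cons big_nil addr0 add0r.
Qed.

Variable v1 : 'I_n.
Hypothesis v1_first : nat_of_ord v1 = 0%N.

Definition npaths_size (v : 'I_n) (L : R) (k : nat) : nat :=
  #|[set t : k.-tuple 'I_n |
      [&& path E v1 t, last v1 t == v & plen len v1 t <= L]]|.

Lemma npathsE (v : 'I_n) (L : R) :
  npaths E len v1 v L = (\sum_(0 <= k < n) npaths_size v L k)%N.
Proof. by rewrite big_mkord. Qed.

Lemma npaths_size_eq0 (v : 'I_n) (L : R) (k : nat) :
  (v < k)%N -> npaths_size v L k = 0%N.
Proof.
move=> lt_vk; apply/eqP; rewrite cards_eq0; apply/eqP/setP => t.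
rewrite !inE; apply/negbTE/negP => /and3P[/path_addsize_le_last le_last /eqP last_v _].
by move: le_last; rewrite last_v size_tuple v1_first add0n leqNgt lt_vk.
Qed.

Lemma npaths_size0 (v : 'I_n) (L : R) :
  npaths_size v L 0 = ((v == v1) && (0 <= L) : nat).
Proof.
rewrite /npaths_size card_set_sum (big_pred1 [tuple]) /=; last first.
  by move=> t; rewrite [t]tuple0 /= eqxx.
by rewrite eq_sym /plen big_nil.
Qed.

Lemma npaths_sizeS (v : 'I_n) (L : R) (k : nat) : v != v1 ->
  npaths_size v L k.+1 = (\sum_(p | E p v) npaths_size p (L - len p v) k)%N.
Proof.
move=> v_neq; rewrite /npaths_size card_set_sum big_tuple_rcons.
under [LHS]eq_bigr => t _.
  rewrite (bigD1 v) //= big1 ?addn0; last first.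
    by move=> x /negbTE x_neq; rewrite last_rcons x_neq andbF.
  rewrite rcons_path last_rcons eqxx plen_rcons.
  over.
under [RHS]eq_bigr => p _ do rewrite card_set_sum.
rewrite /= (exchange_big_dep predT) //=; apply: eq_bigr => t _.
have [E_last|not_E_last] /= := boolP (E (last v1 t) v).
  rewrite (bigD1 (last v1 t)) ?E_last //= big1 ?addn0; last first.
    by move=> p /andP[_ /negbTE p_neq]; rewrite eq_sym p_neq andbF.
  by rewrite eqxx lerBrDr; case: (path E v1 t).
case: (path E v1 t); last by rewrite big1.
rewrite big1 // => p /andP[E_pv _].
have [last_p|] //= := eqVneq (last v1 t) p.
by rewrite last_p E_pv in not_E_last.
Qed.

Lemma npaths_rec (v : 'I_n) (L : R) : v != v1 ->
  npaths E len v1 v L = (\sum_(p | E p v) npaths E len v1 p (L - len p v))%N.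
Proof.
move=> v_neq; have n_gt0 : (0 < n)%N by apply: leq_ltn_trans (ltn_ord v).
rewrite npathsE big_nat_recl0 // npaths_size0 (negbTE v_neq) add0n.
under eq_big_nat => k _ do rewrite npaths_sizeS //.
rewrite exchange_big /=; apply: eq_bigr => p E_pv.
rewrite npathsE (big_nat_recr0 _ n_gt0) npaths_size_eq0 ?addn0 //.
by rewrite -ltnS prednK //; exact: leq_ltn_trans (E_topo E_pv) (ltn_ord v).
Qed.

Lemma npaths_first (L : R) : npaths E len v1 v1 L = ((0 <= L)%R : nat).
Proof.
have n_gt0 : (0 < n)%N by apply: leq_ltn_trans (ltn_ord v1).
rewrite npathsE big_nat_recl0 // npaths_size0 eqxx big1_seq ?addn0 // => k _.
by apply: npaths_size_eq0; rewrite v1_first.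
Qed.

Lemma tau_le (v : 'I_n) (x L : R) :
  x <= (npaths E len v1 v L)%:R -> (tau E len v1 v x <= L%:E)%E.
Proof. by move=> le_xN; apply: ereal_inf_lbound; exists L. Qed.

Lemma npaths_lt_of_lt_tau (v : 'I_n) (x L : R) :
  (L%:E < tau E len v1 v x)%E -> (npaths E len v1 v L)%:R < x.
Proof. by apply: contraTT; rewrite -!leNgt => /tau_le. Qed.

End Paths.

Section Rounding.
Variables (R : realType) (q : R).
Hypothesis q_gt1 : 1 < q.

Let q_gt0 : 0 < q. Proof. exact: lt_trans q_gt1. Qed.
Let q_neq0 : q != 0. Proof. exact: lt0r_neq0. Qed.

Lemma powR_intlogq (j : int) (a : R) : 0 < a ->
  q `^ (j%:~R + logq q a) = q ^ j * a.
Proof.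
move=> a_gt0; rewrite powRD ?q_neq0 ?implybT // powR_intmul ?(ltW q_gt0) //.
by rewrite /powR (negbTE q_neq0) /logq divfK ?lnK // gt_eqF // ln_gt0.
Qed.

Lemma expr_floor_logq_le (j : int) (a : R) : 0 < a ->
  q ^ Num.floor (j%:~R + logq q a) <= a * q ^ j.
Proof.
move=> a_gt0; rewrite mulrC -powR_intlogq // -powR_intmul ?(ltW q_gt0) //.
by apply: ler_powR; [exact: ltW | case/andP: (floor_itv (j%:~R + logq q a))].
Qed.

(* Rounding down loses less than one factor q, which the gap m - p >= 1 absorbs. *)
Lemma expr_floor_logq_ge (j : int) (a : R) (p m : nat) : 0 < a -> (p < m)%N ->
  a * q ^ (j - m%:Z) <= q ^ (Num.floor (j%:~R + logq q a) - p%:Z).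
Proof.
move=> a_gt0 lt_pm; set fl := Num.floor _.
have le_aqj : a * q ^ j <= q ^ (fl + 1).
  rewrite mulrC -powR_intlogq // -powR_intmul ?(ltW q_gt0) //.
  apply: ler_powR; first exact: ltW.
  by case/andP: (floor_itv (j%:~R + logq q a)) => _ /ltW.
have -> : fl - p%:Z = (fl + 1) + - (p.+1)%:Z by rewrite -addn1 PoszD; ring.
have qNp_ge0 : 0 <= q ^ (- (p.+1)%:Z) by rewrite exprz_ge0 ?(ltW q_gt0).
rewrite [X in _ <= X]expfzDr ?q_neq0 //; apply: le_trans (ler_wpM2r qNp_ge0 le_aqj).
rewrite -mulrA -expfzDr ?q_neq0 //; apply: ler_wpM2l; first exact: ltW.
by apply: ler_weXz2l; [exact: ltW | rewrite lerD2l lerN2 lez_nat].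
Qed.

End Rounding.

Section Tau'.
Variables (R : realType) (n : nat) (E : rel 'I_n) (len : 'I_n -> 'I_n -> R).
Hypothesis E_topo : forall u v : 'I_n, E u v -> (u < v)%N.
Variable v1 : 'I_n.
Hypothesis v1_first : nat_of_ord v1 = 0%N.
Variable q : R.
Hypothesis q_gt1 : 1 < q.

Let q_gt0 : 0 < q. Proof. exact: lt_trans q_gt1. Qed.

Lemma tau'_tabE m (p : 'I_n) y : (p < m)%N ->
  tau'_tab E len q m p y = tau' E len q p y.
Proof.
elim: m => // m IH lt_pm /=; case: ifP => [|/negbT]; first exact: IH.
rewrite -leqNgt => le_mp; have -> : m = p by apply/eqP; rewrite eqn_leq le_mp.
by rewrite /tau' /= ltnn.
Qed.

Lemma tau'E (i : 'I_n) y :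
  tau' E len q i y = tau'_step E len q (tau'_tab E len q i) i y.
Proof. by rewrite /tau' /= ltnn. Qed.

Lemma neq_first_ord_neq0 (i : 'I_n) : i != v1 -> (nat_of_ord i == 0%N) = false.
Proof. by apply: contraNF => /eqP i0; apply/eqP/val_inj; rewrite /= i0 v1_first. Qed.

Lemma tau'_first (j : int) :
  tau' E len q v1 (Some j) = if (j <= 0)%R then 0%E else +oo%E.
Proof. by rewrite tau'E /= v1_first. Qed.

Lemma npaths_ge_of_tau'_lt (i : 'I_n) (j : int) (M : R) :
  (tau' E len q i (Some j) < M%:E)%E ->
  q ^ (j - (nat_of_ord i)%:Z) <= (npaths E len v1 i M)%:R.
Proof.
elim/ord_ltn_ind: i j M => i IH j M.
have [->|i_neq] := eqVneq i v1.
  rewrite tau'_first v1_first subr0 npaths_first //.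
  case: ifP => // j_le0; rewrite lte_fin => /ltW -> /=.
  by rewrite -(expr0z q) ler_weXz2l // ltW.
rewrite tau'E /= neq_first_ord_neq0 //.
case/ereal_inf_lt => _ [alpha [alpha_ge0 alpha_sum1 ->]] /bigmax_ltP[_ lt_M].
rewrite npaths_rec // natr_sum -[q ^ _]mulr1 -{1}alpha_sum1 mulr_sumr.
apply: ler_sum => p E_pi.
have [->|alpha_neq0] := eqVneq (alpha p) 0; first by rewrite mulr0.
have alpha_gt0 : 0 < alpha p by rewrite lt0r alpha_neq0 alpha_ge0.
have lt_pi := E_topo E_pi.
move: (lt_M p E_pi); rewrite (negbTE alpha_neq0) tau'_tabE //.
move=> /lte_addEFin /(IH _ lt_pi); apply: le_trans.
by rewrite mulrC expr_floor_logq_ge.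
Qed.

Lemma tau'_le_of_npaths_ge (i : 'I_n) (j : int) (L : R) :
  q ^ j <= (npaths E len v1 i L)%:R -> (tau' E len q i (Some j) <= L%:E)%E.
Proof.
elim/ord_ltn_ind: i j L => i IH j L le_qN.
have qj_gt0 : 0 < q ^ j by rewrite exprz_gt0.
have [i_v1|i_neq] := eqVneq i v1.
  move: le_qN; rewrite i_v1 tau'_first npaths_first //.
  have [L_ge0 /= le_q1|_ /=] := leP 0 L; last by rewrite leNgt qj_gt0.
  by rewrite -(ler_eXz2l q_gt1) expr0z le_q1 lee_fin.
rewrite tau'E /= neq_first_ord_neq0 //.
set N := npaths E len v1 i L.
have N_gt0 : 0 < (N%:R : R) by apply: lt_le_trans le_qN.
pose alpha p := (npaths E len v1 p (L - len p i))%:R / (N%:R : R).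
apply: le_trans (ereal_inf_lbound _) _.
  exists alpha; split=> //; first by move=> p _; rewrite divr_ge0.
  by rewrite -mulr_suml -natr_sum -npaths_rec // divff ?lt0r_neq0.
apply/bigmax_leP; split=> [|p E_pi]; first by rewrite leNye.
have lt_pi := E_topo E_pi; rewrite !tau'_tabE //; case: ifP => [_|/negbT alpha_neq0].
  by rewrite tau'E /= leNye.
have alpha_gt0 : 0 < alpha p by rewrite lt0r alpha_neq0 divr_ge0.
apply: lee_addEFin; apply: IH lt_pi _ _ _.
apply: le_trans (expr_floor_logq_le q_gt1 _ alpha_gt0) _.
apply: le_trans (ler_wpM2l (ltW alpha_gt0) le_qN) _.
by rewrite /alpha divfK ?lt0r_neq0.
Qed.

Lemma tau'_le_tau (v : 'I_n) (j : int) (x : R) :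
  q ^ j <= x -> (tau' E len q v (Some j) <= tau E len v1 v x)%E.
Proof.
move=> le_qx; apply: le_ereal_inf_tmp => _ [L le_xN <-].
by apply: tau'_le_of_npaths_ge; apply: le_trans le_qx le_xN.
Qed.

Lemma expr_le_of_tau'_le_lt_tau (v : 'I_n) (j : int) (L : R) (a : nat) :
  (tau' E len q v (Some j) <= L%:E)%E -> (L%:E < tau E len v1 v a.+1%:R)%E ->
  q ^ (j - (nat_of_ord v)%:Z) <= a%:R.
Proof.
move=> le_tau'L /lte_EFin_dense[L' lt_LL' lt_L'tau].
have /npaths_ge_of_tau'_lt le_qN : (tau' E len q v (Some j) < L'%:E)%E.
  by apply: le_lt_trans le_tau'L _; rewrite lte_fin.
apply: le_trans le_qN _; rewrite ler_nat -ltnS -(ltr_nat R).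
exact: npaths_lt_of_lt_tau lt_L'tau.
Qed.

End Tau'.

Lemma root_expr (R : realType) (x : R) (m : nat) : 0 <= x ->
  (x `^ (m.+1%:R)^-1) ^+ m.+1 = x.
Proof. by move=> x_ge0; rewrite -powR_mulrn ?powR_ge0 // -powRrM mulVf ?powRr1. Qed.

Lemma root_gt1 (R : realType) (x : R) (m : nat) : 1 < x -> 1 < x `^ (m.+1%:R)^-1.
Proof.
move=> x_gt1; have x_ge0 : 0 <= x by rewrite ltW // (lt_trans ltr01).
rewrite ltNge; apply/negP => /(exprn_ile1 m.+1 (powR_ge0 _ _)).
by rewrite root_expr // leNgt x_gt1.
Qed.

Theorem lemma2 (R : realType) (n : nat) (hn : (0 < n)%N)
  (E : rel 'I_n) (len : 'I_n -> 'I_n -> R)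
  (htop : forall u v : 'I_n, E u v -> (u < v)%N)
  (eps : R) (heps : 0 < eps) (L : R) (k : int) (a : nat) :
  let q := (1 + eps) `^ (n.+1%:R)^-1 in
  (tau' E len q (vlast hn) (Some k) <= L%:E < tau' E len q (vlast hn) (Some (k + 1)%R))%E ->
  (tau E len (vfirst hn) (vlast hn) a%:R%R <= L%:E < tau E len (vfirst hn) (vlast hn) (a.+1)%:R%R)%E ->
  (1 + eps)^-1 <= a%:R / q ^ k <= 1 + eps.
Proof.
move=> q /andP[le_tau'L lt_Ltau'] /andP[le_tauL lt_Ltau].
have q_gt1 : 1 < q by apply: root_gt1; lra.
have q_neq0 : q != 0 by rewrite gt_eqF // (lt_trans ltr01).
have eps_qn : 1 + eps = q ^ (n.+1)%:Z by rewrite -exprnP /q root_expr //; lra.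
clearbody q.
have qk_gt0 : 0 < q ^ k by rewrite exprz_gt0 // (lt_trans ltr01).
have v1_first : nat_of_ord (vfirst hn) = 0%N by [].
have le_qa : q ^ (k - (n.-1)%:Z) <= a%:R.
  exact: (expr_le_of_tau'_le_lt_tau htop v1_first q_gt1 le_tau'L lt_Ltau).
have lt_aq : a%:R < q ^ (k + 1).
  rewrite ltNge; apply: contraTN lt_Ltau' => le_qa'; rewrite -leNgt.
  exact: le_trans (tau'_le_tau len htop v1_first q_gt1 _ le_qa') le_tauL.
apply/andP; split.
  rewrite ler_pdivlMr // eps_qn invr_expz -expfzDr // addrC.
  apply: le_trans le_qa; apply: ler_weXz2l; first exact: ltW.
  by rewrite lerD2l lerN2 lez_nat (leq_trans (leq_pred n)).
rewrite ler_pdivrMr //; apply: (le_trans (ltW lt_aq)).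
rewrite expfzDr // expr1z mulrC ler_wpM2r ?(ltW qk_gt0) // eps_qn.
by rewrite -{1}(expr1z q) ler_weXz2l // ltW.
Qed.
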